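(* Let $E$ be an order continuous Banach lattice with a weak unit, represented over a probability space $(\Omega,\Sigma,\mu)$ as in the context, let $Y$ be a Banach space and $T\in\mathrm{DN\text{-}S}(E,Y)$. Then there exists $r>0$ such that for every measurable set $A\subset\Omega$ with $0<\mu(A)<r$, the restriction of $T$ to $E_A=\{x\in E:\operatorname{supp}x\subset A\}$ is an isomorphism (into $Y$).
   Context: A Banach lattice $E$ is order continuous if every net decreasing in order to $0$ converges in norm to $0$; $e\in E_+$ is a weak unit if $|x|\wedge e=0$ implies $x=0$. Representation: every order continuous Banach lattice $E$ with a weak unit can be represented over a probability space $(\Omega,\Sigma,\mu)$ so that $L_\infty(\mu)\subset E\subset L_1(\mu)$, $E$ is dense in $L_1(\mu)$, $L_\infty(\mu)$ is dense in $E$, $\|f\|_1\le\|f\|_E\le 2\|f\|_\infty$ for $f\in L_\infty(\mu)$, and the order of $E$ is the one induced by $L_1(\mu)$; such a representation is fixed. For $x\in E$, $\operatorname{supp}x=\{t\in\Omega: x(t)\neq 0\}$. An operator is strictly singular if it is an isomorphism on no closed infinite-dimensional subspace. $T\in\mathrm{L}(E,Y)$ is disjointly non-singular ($T\in\mathrm{DN\text{-}S}(E,Y)$) if there is no disjoint sequence $(x_n)$ of non-zero vectors of $E$ such that the restriction of $T$ to the closed span $[x_n]$ is strictly singular. *)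

From HB Require Import structures.
From mathcomp Require Import all_boot all_order all_algebra.
From mathcomp Require Import all_classical all_reals all_analysis.
Import Order.TTheory GRing.Theory Num.Theory numFieldNormedType.Exports.
Set Implicit Arguments. Unset Strict Implicit. Unset Printing Implicit Defensive.
Local Open Scope classical_set_scope.
Local Open Scope ring_scope.

(* Elements of the Köthe-type space E are functions Omega -> R, identified
   modulo mu-a.e. equality (E is a set of functions closed under a.e. change,
   nE a lattice seminorm vanishing exactly on null functions). *)

Definition ae_eq d (Omega : measurableType d) (R : realType)
  (mu : probability Omega R) (f g : Omega -> R) : Prop :=
  {ae mu, forall t, f t = g t}.

Definition ae_le d (Omega : measurableType d) (R : realType)
  (mu : probability Omega R) (f g : Omega -> R) : Prop :=
  {ae mu, forall t, f t <= g t}.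

Definition fsub d (Omega : measurableType d) (R : realType) (f g : Omega -> R) :
  Omega -> R := fun t => f t - g t.

(* E (with norm nE) is an order continuous Banach lattice with a weak unit,
   represented over the probability space (Omega, mu) as in the context:
   L_oo(mu) c E c L_1(mu), E dense in L_1, L_oo dense in E,
   ||f||_1 <= ||f||_E <= 2 ||f||_oo on L_oo, pointwise a.e. order. *)
Record ocbl_repr d (Omega : measurableType d) (R : realType)
    (mu : probability Omega R) (E : set (Omega -> R)) (nE : (Omega -> R) -> R)
    : Prop := {
  E_meas : forall f, E f -> measurable_fun setT f;
  E_int : forall f, E f -> mu.-integrable setT (EFin \o f);
  E_ae : forall f g, E f -> measurable_fun setT g -> ae_eq mu f g -> E g;
  E_zero : E (fun _ => 0);
  E_add : forall f g, E f -> E g -> E (fun t => f t + g t);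
  E_scale : forall (a : R) f, E f -> E (fun t => a * f t);
  E_abs : forall f, E f -> E (fun t => `|f t|);
  nE_triangle : forall f g, E f -> E g ->
    nE (fun t => f t + g t) <= nE f + nE g;
  nE_scale : forall (a : R) f, E f -> nE (fun t => a * f t) = `|a| * nE f;
  nE_eq0 : forall f, E f -> (nE f = 0 <-> ae_eq mu f (fun _ => 0));
  nE_lattice : forall f g, E f -> E g ->
    ae_le mu (fun t => `|f t|) (fun t => `|g t|) -> nE f <= nE g;
  E_complete : forall u : nat -> Omega -> R, (forall n, E (u n)) ->
    (forall eps : R, 0 < eps -> exists N : nat, forall m n : nat,
        (N <= m)%N -> (N <= n)%N -> nE (fsub (u m) (u n)) < eps) ->
    exists f, E f /\ forall eps : R, 0 < eps ->
      exists N : nat, forall n : nat, (N <= n)%N -> nE (fsub (u n) f) < eps;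
  E_ordcont : forall (I : Type) (le : I -> I -> Prop) (x : I -> Omega -> R),
    (exists i : I, True) ->
    (forall i, le i i) ->
    (forall i j k, le i j -> le j k -> le i k) ->
    (forall i j, exists k, le i k /\ le j k) ->
    (forall i, E (x i)) ->
    (forall i j, le i j -> ae_le mu (x j) (x i)) ->
    (forall i, ae_le mu (fun _ => 0) (x i)) ->
    (forall y, E y -> (forall i, ae_le mu y (x i)) -> ae_le mu y (fun _ => 0)) ->
    forall eps : R, 0 < eps -> exists i0, forall i, le i0 i -> nE (x i) < eps;
  E_weak_unit : exists e, E e /\ ae_le mu (fun _ => 0) e /\
    forall x, E x -> ae_eq mu (fun t => Num.min `|x t| (e t)) (fun _ => 0) ->
      ae_eq mu x (fun _ => 0);
  Linf_sub : forall (f : Omega -> R) (M : R), measurable_fun setT f ->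
    ae_le mu (fun t => `|f t|) (fun _ => M) ->
    [/\ E f, nE f <= 2 * M &
        (\int[mu]_t (`|f t|)%:E <= (nE f)%:E)%E];
  Linf_dense : forall f, E f -> forall eps : R, 0 < eps ->
    exists (g : Omega -> R) (M : R), [/\ measurable_fun setT g,
      ae_le mu (fun t => `|g t|) (fun _ => M) & nE (fsub f g) < eps];
  E_dense_L1 : forall f : Omega -> R, mu.-integrable setT (EFin \o f) ->
    forall eps : R, 0 < eps -> exists g, E g /\
      (\int[mu]_t (`|f t - g t|)%:E < eps%:E)%E
}.

Record bdd_op d (Omega : measurableType d) (R : realType)
    (mu : probability Omega R) (E : set (Omega -> R)) (nE : (Omega -> R) -> R)
    (Y : normedModType R) (T : (Omega -> R) -> Y) : Prop := {
  T_add : forall f g, E f -> E g -> T (fun t => f t + g t) = T f + T g;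
  T_scale : forall (a : R) f, E f -> T (fun t => a * f t) = a *: T f;
  T_ae : forall f g, E f -> E g -> ae_eq mu f g -> T f = T g;
  T_bdd : exists C : R, forall f, E f -> `|T f| <= C * nE f
}.

(* T restricted to Z is an isomorphism (into Y); boundedness is part of bdd_op *)
Definition iso_on d (Omega : measurableType d) (R : realType)
    (nE : (Omega -> R) -> R) (Y : normedModType R) (T : (Omega -> R) -> Y)
    (Z : set (Omega -> R)) : Prop :=
  exists c : R, 0 < c /\ forall z, Z z -> c * nE z <= `|T z|.

Definition closed_subspace d (Omega : measurableType d) (R : realType)
    (mu : probability Omega R) (E : set (Omega -> R)) (nE : (Omega -> R) -> R)
    (Z : set (Omega -> R)) : Prop :=
  [/\ Z `<=` E, Z (fun _ => 0),
      (forall f g, Z f -> Z g -> Z (fun t => f t + g t)) /\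
      forall (a : R) f, Z f -> Z (fun t => a * f t),
      forall f g, Z f -> E g -> ae_eq mu f g -> Z g &
      forall (u : nat -> Omega -> R) f, (forall n, Z (u n)) -> E f ->
        (forall eps : R, 0 < eps -> exists N : nat, forall n : nat,
           (N <= n)%N -> nE (fsub (u n) f) < eps) -> Z f].

Definition infinite_dim d (Omega : measurableType d) (R : realType)
    (mu : probability Omega R) (Z : set (Omega -> R)) : Prop :=
  forall n : nat, exists v : 'I_n -> Omega -> R, (forall i, Z (v i)) /\
    forall a : 'I_n -> R,
      ae_eq mu (fun t => \sum_(i < n) a i * v i t) (fun _ => 0) ->
      forall i, a i = 0.

Definition strictly_singular_on d (Omega : measurableType d) (R : realType)
    (mu : probability Omega R) (E : set (Omega -> R)) (nE : (Omega -> R) -> R)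
    (Y : normedModType R) (T : (Omega -> R) -> Y) (W : set (Omega -> R)) : Prop :=
  forall Z, closed_subspace mu E nE Z -> Z `<=` W -> infinite_dim mu Z ->
    ~ iso_on nE T Z.

Definition closed_span d (Omega : measurableType d) (R : realType)
    (E : set (Omega -> R)) (nE : (Omega -> R) -> R) (x : nat -> Omega -> R)
    : set (Omega -> R) :=
  [set f | E f /\ forall eps : R, 0 < eps -> exists (N : nat) (a : nat -> R),
     nE (fsub f (fun t => \sum_(k < N) a k * x k t)) < eps].

Definition disjoint_nonzero_seq d (Omega : measurableType d) (R : realType)
    (mu : probability Omega R) (E : set (Omega -> R)) (x : nat -> Omega -> R)
    : Prop :=
  [/\ forall n, E (x n),
      forall n, ~ ae_eq mu (x n) (fun _ => 0) &
      forall n m, n <> m ->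
        ae_eq mu (fun t => Num.min `|x n t| `|x m t|) (fun _ => 0)].

Definition DNS d (Omega : measurableType d) (R : realType)
    (mu : probability Omega R) (E : set (Omega -> R)) (nE : (Omega -> R) -> R)
    (Y : normedModType R) (T : (Omega -> R) -> Y) : Prop :=
  ~ exists x : nat -> Omega -> R, disjoint_nonzero_seq mu E x /\
      strictly_singular_on mu E nE T (closed_span E nE x).

(* E_A = {x in E : supp x c A} (supports up to null sets, as x is a class) *)
Definition E_sub d (Omega : measurableType d) (R : realType)
    (mu : probability Omega R) (E : set (Omega -> R)) (A : set Omega)
    : set (Omega -> R) :=
  [set x | E x /\ {ae mu, forall t, ~ A t -> x t = 0}].

From HB Require Import structures.
From mathcomp Require Import all_boot all_order all_algebra.
From mathcomp Require Import all_classical all_reals all_analysis.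
From mathcomp Require Import ring lra.
Import Order.TTheory GRing.Theory Num.Theory numFieldNormedType.Exports.
Local Open Scope classical_set_scope.
Local Open Scope ring_scope.
Set Implicit Arguments. Unset Strict Implicit. Unset Printing Implicit Defensive.

(* If no such r existed, there would be sets of arbitrarily small measure carrying bounded
   functions w with ||w|| >= 1/2 and ||T w|| arbitrarily small.  Choosing the supports with
   rapidly decreasing measures, order continuity makes the part of each w_n lying on the
   later supports negligible; cutting it away leaves a disjoint sequence x_n with
   ||x_n|| >= 1/4 and ||T x_n|| <= C 2^-n.  Disjointness bounds every coefficient of an
   element of [x_n] by a multiple of its norm, so T is small on the elements of [x_n] whose
   first N coefficients vanish, and every (N+1)-dimensional subspace contains a non-zero such
   element.  Hence T is strictly singular on [x_n], contradicting T in DN-S(E,Y). *)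

Lemma lincomb_closed (U : Type) (R : pzSemiRingType) (S : set (U -> R)) (I : Type)
    (r : seq I) (c : I -> R) (v : I -> U -> R) :
  S (fun _ => 0) -> (forall f g, S f -> S g -> S (fun t => f t + g t)) ->
  (forall a f, S f -> S (fun t => a * f t)) ->
  (forall i, S (v i)) -> S (fun t => \sum_(i <- r) c i * v i t).
Proof.
move=> S0 Sadd Sscale Sv; elim: r => [|i r IH].
  by under eq_fun do rewrite big_nil.
under eq_fun do rewrite big_cons.
by apply: Sadd => //; apply: Sscale.
Qed.

Section Norm.
Variables (d : measure_display) (Omega : measurableType d) (R : realType)
  (mu : probability Omega R) (E : set (Omega -> R)) (nE : (Omega -> R) -> R).
Hypothesis HE : ocbl_repr mu E nE.

Lemma fsubE (f g : Omega -> R) : fsub f g = (fun t => f t + (-1) * g t).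
Proof. by apply: funext => t; rewrite /fsub mulN1r. Qed.

Lemma E_fsub f g : E f -> E g -> E (fsub f g).
Proof. by move=> Ef Eg; rewrite fsubE; apply: (E_add HE) => //; apply: (E_scale HE). Qed.

Lemma E_sum (I : Type) (r : seq I) (c : I -> R) (v : I -> Omega -> R) :
  (forall i, E (v i)) -> E (fun t => \sum_(i <- r) c i * v i t).
Proof.
by apply: lincomb_closed; [exact: (E_zero HE)|exact: (E_add HE)|exact: (E_scale HE)].
Qed.

Lemma E_indic (D : set Omega) : measurable D -> E (\1_D : Omega -> R).
Proof.
move=> mD; have bound1 t : `|(\1_D t : R)| <= 1 by rewrite ger0_norm // indicE lern1 leq_b1.
have mD1 := @measurable_realfun.measurable_indic _ _ R setT D mD.
by have [] := Linf_sub HE mD1 (aeW _ bound1).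
Qed.

Lemma nE0 : nE (fun _ => 0) = 0.
Proof.
have := nE_scale HE 0 (E_zero HE).
by under eq_fun do rewrite mul0r; rewrite normr0 mul0r.
Qed.

Lemma nE_ge0 f : E f -> 0 <= nE f.
Proof.
move=> Ef; have := nE_triangle HE Ef (E_scale HE (-1) Ef).
have -> : (fun t => f t + (-1) * f t) = (fun _ => 0).
  by apply: funext => t; rewrite mulN1r subrr.
by rewrite nE0 (nE_scale HE _ Ef) normrN normr1 mul1r -mulr2n pmulrn_lge0.
Qed.

Lemma nE_fsubC f g : E f -> E g -> nE (fsub f g) = nE (fsub g f).
Proof.
move=> Ef Eg.
have -> : fsub f g = (fun t => (-1) * fsub g f t).
  by apply: funext => t; rewrite /fsub mulN1r opprB.
by rewrite (nE_scale HE _ (E_fsub Eg Ef)) normrN normr1 mul1r.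
Qed.

Lemma nE_fsub_triangle f g h : E f -> E g -> E h ->
  nE (fsub f h) <= nE (fsub f g) + nE (fsub g h).
Proof.
move=> Ef Eg Eh.
have -> : fsub f h = (fun t => fsub f g t + fsub g h t).
  by apply: funext => t; rewrite /fsub addrA subrK.
exact: (nE_triangle HE (E_fsub Ef Eg) (E_fsub Eg Eh)).
Qed.

Lemma nE_lerB_fsub f g : E f -> E g -> nE f - nE (fsub f g) <= nE g.
Proof.
move=> Ef Eg; have := nE_triangle HE (E_fsub Ef Eg) Eg.
by under eq_fun do rewrite /fsub subrK; rewrite lerBlDl.
Qed.

Lemma nE_le f g : E f -> E g -> (forall t, `|f t| <= `|g t|) -> nE f <= nE g.
Proof. by move=> Ef Eg fg; apply: (nE_lattice HE Ef Eg); apply: aeW. Qed.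

Lemma nE_sum (I : Type) (r : seq I) (c : I -> R) (v : I -> Omega -> R) :
  (forall i, E (v i)) ->
  nE (fun t => \sum_(i <- r) c i * v i t) <= \sum_(i <- r) `|c i| * nE (v i).
Proof.
move=> Ev; elim: r => [|i r IH].
  by under eq_fun do rewrite big_nil; rewrite big_nil nE0.
under eq_fun do rewrite big_cons.
rewrite big_cons; apply: le_trans (nE_triangle HE (E_scale HE _ (Ev i)) (E_sum _ _ Ev)) _.
by rewrite (nE_scale HE _ (Ev i)) lerD2l.
Qed.

End Norm.

Section Operator.
Variables (d : measure_display) (Omega : measurableType d) (R : realType)
  (mu : probability Omega R) (E : set (Omega -> R)) (nE : (Omega -> R) -> R).
Hypothesis HE : ocbl_repr mu E nE.
Variables (Y : normedModType R) (T : (Omega -> R) -> Y).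
Hypothesis HT : bdd_op mu E nE T.

Lemma T0 : T (fun _ => 0) = 0.
Proof.
have := T_scale HT 0 (E_zero HE).
by under eq_fun do rewrite mul0r; rewrite scale0r.
Qed.

Lemma T_sum (I : Type) (r : seq I) (c : I -> R) (v : I -> Omega -> R) :
  (forall i, E (v i)) ->
  T (fun t => \sum_(i <- r) c i * v i t) = \sum_(i <- r) c i *: T (v i).
Proof.
move=> Ev; elim: r => [|i r IH].
  by under eq_fun do rewrite big_nil; rewrite big_nil T0.
under eq_fun do rewrite big_cons.
rewrite big_cons (T_add HT) ?(T_scale HT) ?IH //; first exact: (E_scale HE).
exact: (E_sum HE).
Qed.

Lemma T_fsub f g : E f -> E g -> T (fsub f g) = T f - T g.
Proof.
move=> Ef Eg; rewrite fsubE (T_add HT) //; last exact: (E_scale HE).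
by rewrite (T_scale HT) // scaleN1r.
Qed.

Lemma bdd_op_nonneg_bound : exists2 K : R, 0 <= K & forall f, E f -> `|T f| <= K * nE f.
Proof.
have [C hC] := T_bdd HT; exists `|C| => // f Ef.
by apply: le_trans (hC f Ef) _; apply: ler_wpM2r; [exact: (nE_ge0 HE Ef)|exact: ler_norm].
Qed.

Lemma not_iso_on_small (Z : set (Omega -> R)) : Z `<=` E ->
  (forall a f, Z f -> Z (fun t => a * f t)) -> ~ iso_on nE T Z ->
  forall e, 0 < e -> exists z, [/\ Z z, nE z = 1 & `|T z| < e].
Proof.
move=> ZE Zscale not_iso e e0.
have [z [Zz Tz]] : exists z, Z z /\ `|T z| < e * nE z.
  apply: contrapT => small; apply: not_iso; exists e; split => // z Zz.
  by rewrite leNgt; apply/negP => Tz; apply: small; exists z.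
have nz_gt0 : 0 < nE z by rewrite -(pmulr_rgt0 _ e0); apply: le_lt_trans Tz.
exists (fun t => (nE z)^-1 * z t); split; first exact: Zscale.
  by rewrite (nE_scale HE _ (ZE _ Zz)) ger0_norm ?invr_ge0 ?ltW // mulVf // gt_eqF.
rewrite (T_scale HT _ (ZE _ Zz)) normrZ ger0_norm ?invr_ge0 ?ltW //.
by rewrite mulrC ltr_pdivrMr.
Qed.

End Operator.

(** * Absolute continuity of the norm *)

Lemma normr_indicM_le (T : Type) (R : realType) (A : set T) (g : T -> R) t :
  `|\1_A t * g t| <= `|g t|.
Proof. by rewrite normrM ger0_norm ?indicE ?ler0n // ler_piMl // lern1 leq_b1. Qed.

Lemma le_indic (T : Type) (R : realType) (A B : set T) t :
  A `<=` B -> (\1_A t : R) <= \1_B t.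
Proof.
move=> AB; rewrite !indicE; have [/set_mem At|] := boolP (t \in A); last by rewrite ler0n.
by rewrite (mem_set (AB _ At)).
Qed.

Lemma exists_inv_pow2_lt (R : realType) (e : R) : 0 < e ->
  exists n : nat, ((2 ^ n)%:R)^-1 < e.
Proof.
move=> e0; have [N _ hN] := near_infty_natSinv_expn_lt (PosNum e0).
by exists N; rewrite natrX -div1r; apply: hN => /=.
Qed.

Lemma exists_natSinv_lt (R : realType) (e : R) : 0 < e ->
  exists n : nat, (n.+1%:R)^-1 < e.
Proof.
move=> e0; have [N _ hN] := near_infty_natSinv_lt (PosNum e0).
by exists N; apply: hN => /=.
Qed.

Lemma measure_bigcup_le_halves d (T : measurableType d) (R : realType)
    (mu : {measure set T -> \bar R}) (F : nat -> set T) (eta : R) :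
  0 <= eta -> (forall k, measurable (F k)) ->
  (forall k, (mu (F k) <= (eta / (2 ^ k.+1)%:R)%:E)%E) ->
  (mu (\bigcup_k F k) <= eta%:E)%E.
Proof.
move=> eta0 mF muF.
have mU := bigcupT_measurable _ mF.
apply: le_trans (measure_sigma_subadditive mu mF mU (@subset_refl _ _)) _.
apply: le_trans (epsilon_trick0 predT eta0).
by apply: lee_nneseries => k *; [exact: measure_ge0|exact: muF].
Qed.

Section AbsoluteContinuity.
Variables (d : measure_display) (Omega : measurableType d) (R : realType)
  (mu : probability Omega R) (E : set (Omega -> R)) (nE : (Omega -> R) -> R).
Hypothesis HE : ocbl_repr mu E nE.

Lemma nE_indic_le (A B : set Omega) : measurable A -> measurable B -> A `<=` B ->
  nE (\1_A : Omega -> R) <= nE (\1_B : Omega -> R).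
Proof.
move=> mA mB AB; apply: (nE_le HE (E_indic HE mA) (E_indic HE mB)) => t.
by rewrite !ger0_norm ?indicE ?ler0n // -!indicE le_indic.
Qed.

Lemma nE_indic_decr_small (F : nat -> set Omega) :
  (forall n, measurable (F n)) -> (forall m n, (m <= n)%N -> F n `<=` F m) ->
  mu (\bigcap_n F n) = 0%E ->
  forall e, 0 < e -> exists n, nE (\1_(F n) : Omega -> R) < e.
Proof.
move=> mF F_decr null e e0.
have below_indic_null y : E y -> (forall n, ae_le mu y \1_(F n)) ->
    ae_le mu y (fun _ => 0).
  move=> _ yF; have off_cap : \forall t \ae mu, ~ (\bigcap_n F n) t.
    exists (\bigcap_n F n); split => //; first exact: bigcapT_measurable mF.
    by move=> t /= /contrapT.
  apply: filterS2 (ae_foralln yF) off_cap => t yFt not_cap.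
  have [n Fnt] : exists n, ~ F n t.
    apply: contrapT => all_F; apply: not_cap => n _.
    by apply: contrapT => ?; apply: all_F; exists n.
  by apply: le_trans (yFt n) _; rewrite indicE memNset.
have [n small] := E_ordcont HE (le := fun m n => (m <= n)%N)
  (x := fun n => \1_(F n)) (ex_intro _ 0%N I) leqnn (fun i j k => @leq_trans j i k)
  (fun i j => ex_intro _ (maxn i j) (conj (leq_maxl i j) (leq_maxr i j)))
  (fun n => E_indic HE (mF n))
  (fun m n mn => aeW _ (fun t => @le_indic _ R _ _ t (F_decr m n mn)))
  (fun n => aeW _ (fun t => ler0n _ _)) below_indic_null e0.
by exists n; exact: small.
Qed.

Lemma nE_indic_small_measure e : 0 < e -> exists2 eta : R, 0 < eta &
  forall D, measurable D -> (mu D <= eta%:E)%E -> nE (\1_D : Omega -> R) <= e.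
Proof.
move=> e0; apply: contrapT => no_eta.
have large_indic k : exists D, [/\ measurable D,
    (mu D <= (((2 ^ k.+1)%:R)^-1)%:E)%E & e < nE (\1_D : Omega -> R)].
  apply: contrapT => noD; apply: no_eta.
  exists ((2 ^ k.+1)%:R)^-1; first by rewrite invr_gt0 ltr0n expn_gt0.
  by move=> D mD muD; rewrite leNgt; apply/negP => eD; apply: noD; exists D.
have [C hC] := choice large_indic.
have mC k : measurable (C k) by case: (hC k).
pose F n := \bigcup_k C (k + n)%N.
have mF n : measurable (F n) by apply: bigcupT_measurable => k.
have F_decr m n : (m <= n)%N -> F n `<=` F m.
  by move=> mn t [k _ Ct]; exists (k + (n - m))%N => //; rewrite -addnA subnK.
have muF n : (mu (F n) <= (((2 ^ n)%:R)^-1)%:E)%E.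
  apply: measure_bigcup_le_halves => [|k|k]; first by rewrite invr_ge0 ler0n.
    exact: mC.
  case: (hC (k + n)%N) => _ muC _; apply: le_trans muC _.
  by rewrite lee_fin -addSn expnD natrM invfM mulrC.
have null : mu (\bigcap_n F n) = 0%E.
  apply/eqP; rewrite eq_le measure_ge0 andbT; apply/lee_addgt0Pr => r r0.
  have [n small] := exists_inv_pow2_lt r0.
  apply: le_trans (le_measure mu (mem_set (bigcapT_measurable mF)) (mem_set (mF n))
    (fun t (cap : (\bigcap_n F n) t) => cap n I)) _.
  by rewrite add0e; apply: le_trans (muF n) _; rewrite lee_fin ltW.
have [n small] := nE_indic_decr_small mF F_decr null e0.
case: (hC n) => _ _; apply/negP; rewrite -leNgt; apply: le_trans (ltW small).
by apply: nE_indic_le => // t Cnt; exists 0%N.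
Qed.

End AbsoluteContinuity.

(** * Disjoint sequences *)

Lemma sum_inv_pow2_tail_le (R : realType) (N L : nat) :
  \sum_(k < L | (N <= k)%N) ((2 ^ k)%:R : R)^-1 <= 2 * ((2 ^ N)%:R)^-1.
Proof.
suff : \sum_(k < L | (N <= k)%N) ((2 ^ k)%:R : R)^-1 + 2 * ((2 ^ maxn N L)%:R)^-1
    <= 2 * ((2 ^ N)%:R)^-1.
  by apply: le_trans; rewrite lerDl mulr_ge0 // invr_ge0 ler0n.
elim: L => [|L IH]; first by rewrite big_ord0 add0r maxn0.
rewrite big_mkcond big_ord_recr /= -big_mkcond.
case: (leqP N L) => NL; last first.
  by rewrite (maxn_idPl (ltnW NL)) in IH; rewrite addr0 (maxn_idPl NL).
rewrite (maxn_idPr (leqW NL)) -addrA; rewrite (maxn_idPr NL) in IH.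
suff -> : ((2 ^ L)%:R : R)^-1 + 2 * ((2 ^ L.+1)%:R)^-1 = 2 * ((2 ^ L)%:R)^-1 by [].
by rewrite expnS natrM invfM mulrA mulfV ?mul1r ?pnatr_eq0 // -mulr2n mulr_natl.
Qed.

Lemma exists_limit_at_rate (R : realType) (u : nat -> R) (B : R) :
  (forall j j', `|u j - u j'| <= B / j.+1%:R + B / j'.+1%:R) ->
  exists l, forall j, `|u j - l| <= B / j.+1%:R.
Proof.
move=> u_cauchy.
pose S := [set u j - B / j.+1%:R | j in [set: nat]].
have S_ub j : ubound S (u j + B / j.+1%:R).
  move=> _ [j' _ <-]; have := u_cauchy j' j; rewrite ler_norml => /andP[_].
  set r := B / j.+1%:R; set r' := B / j'.+1%:R; lra.
have S_sup : has_sup S by split; [exists (u 0%N - B / 1%:R), 0%N|exists (u 0%N + B / 1%:R)].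
exists (sup S) => j; rewrite ler_norml; apply/andP; split.
  have : sup S <= u j + B / j.+1%:R by apply: ge_sup; [case: S_sup|exact: S_ub].
  set r := B / j.+1%:R; lra.
have : u j - B / j.+1%:R <= sup S by apply: sup_upper_bound => //; exists j.
set r := B / j.+1%:R; lra.
Qed.

Lemma le0_of_forall_le_mul (R : realFieldType) (x M : R) :
  0 <= M -> (forall e, 0 < e -> x <= M * e) -> x <= 0.
Proof.
move=> M0 small; apply/ler_addgt0Pr => z z0; rewrite add0r.
have M10 : 0 < M + 1 by rewrite ltr_wpDl.
apply: le_trans (small _ (divr_gt0 z0 M10)) _.
by rewrite mulrCA ler_piMr ?(ltW z0) // ler_pdivrMr // mul1r lerDl.
Qed.

Lemma exists_kernel_vector (F : fieldType) (n : nat) (alpha : 'I_n.+1 -> 'I_n -> F) :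
  exists2 b : 'I_n.+1 -> F, (exists i, b i != 0) & forall k, \sum_i b i * alpha i k = 0.
Proof.
pose M : 'M[F]_(n.+1, n) := \matrix_(i, k) alpha i k.
have ker_neq0 : kermx M != 0.
  by rewrite -mxrank_eq0 mxrank_ker subn_eq0 -ltnNge (leq_ltn_trans (rank_leq_col M)).
have [i0 [j0 ker_ij]] : exists i j, kermx M i j != 0.
  apply: contrapT => ker0; move/negP: ker_neq0; apply; apply/eqP/matrixP => i j.
  by rewrite [RHS]mxE; apply: contrapT => kij; apply: ker0; exists i, j; exact/eqP.
exists (kermx M i0); first by exists j0.
move=> k; have /matrixP/(_ i0 k) := mulmx_ker M; rewrite !mxE => ker_k.
by rewrite -[RHS]ker_k; apply: eq_bigr => i _; congr (_ * _); rewrite /M mxE.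
Qed.

Section DisjointSequence.
Variables (d : measure_display) (Omega : measurableType d) (R : realType)
  (mu : probability Omega R) (E : set (Omega -> R)) (nE : (Omega -> R) -> R).
Hypothesis HE : ocbl_repr mu E nE.
Variables (Y : normedModType R) (T : (Omega -> R) -> Y).
Hypothesis HT : bdd_op mu E nE T.
Variable K : R.
Hypothesis K0 : 0 <= K.
Hypothesis hK : forall f, E f -> `|T f| <= K * nE f.
Variables (x : nat -> Omega -> R) (a C : R).
Hypothesis Ex : forall n, E (x n).
Hypothesis x_disjoint : forall n m t, n <> m -> x n t = 0 \/ x m t = 0.
Hypothesis a_gt0 : 0 < a.
Hypothesis nEx_ge : forall n, a <= nE (x n).
Hypothesis C0 : 0 <= C.
Hypothesis Tx_le : forall n, `|T (x n)| <= C * ((2 ^ n)%:R)^-1.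

Definition sumx (L : nat) (c : nat -> R) : Omega -> R :=
  fun t => \sum_(k < L) c k * x k t.

Definition coef_supp (L : nat) (c : nat -> R) := forall k, (L <= k)%N -> c k = 0.

Definition has_coefs (f : Omega -> R) (alpha : nat -> R) :=
  forall e, 0 < e -> exists L c, [/\ coef_supp L c, nE (fsub f (sumx L c)) <= e &
    forall k, `|c k - alpha k| <= e].

Lemma E_sumx L c : E (sumx L c).
Proof. exact: (E_sum HE _ (fun k : 'I_L => c k) (fun k : 'I_L => Ex k)). Qed.

Lemma T_sumx L c : T (sumx L c) = \sum_(k < L) c k *: T (x k).
Proof. exact: (T_sum HE HT _ (fun k : 'I_L => c k) (fun k : 'I_L => Ex k)). Qed.

Lemma sumx_widen L L' c : (L <= L')%N -> coef_supp L c -> sumx L' c = sumx L c.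
Proof.
move=> LL' c_supp; apply: funext => t.
rewrite /sumx (big_ord_widen L' (fun k => c k * x k t) LL') [RHS]big_mkcond.
by apply: eq_bigr => k _; case: ltnP => // Lk; rewrite c_supp // mul0r.
Qed.

Lemma fsub_sumx L c c' :
  fsub (sumx L c) (sumx L c') = sumx L (fun k => c k - c' k).
Proof.
by apply: funext => t; rewrite /fsub /sumx -sumrB; apply: eq_bigr => k _; rewrite mulrBl.
Qed.

Lemma coef_le L c k : coef_supp L c -> `|c k| <= nE (sumx L c) / a.
Proof.
move=> c_supp; rewrite ler_pdivlMr //.
have [kL|Lk] := ltnP k L; last first.
  by rewrite c_supp // normr0 mul0r (nE_ge0 HE (E_sumx L c)).
have term_le t : `|c k * x k t| <= `|sumx L c t|.
  have [->|xkt] := eqVneq (x k t) 0; first by rewrite mulr0 normr0.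
  rewrite /sumx (bigD1 (Ordinal kL)) //= big1 ?addr0 // => i /eqP ik.
  have [->|xit] := x_disjoint t (fun ik' => ik (val_inj ik')); first by rewrite mulr0.
  by move/eqP: xkt.
apply: le_trans (nE_le HE (E_scale HE (c k) (Ex k)) (E_sumx L c) term_le).
by rewrite (nE_scale HE _ (Ex k)) ler_wpM2l.
Qed.

Lemma coef_dist_le L L' c c' k : coef_supp L c -> coef_supp L' c' ->
  `|c k - c' k| <= nE (fsub (sumx L c) (sumx L' c')) / a.
Proof.
move=> c_supp c'_supp.
rewrite -(sumx_widen (leq_maxl L L') c_supp) -(sumx_widen (leq_maxr L L') c'_supp).
rewrite fsub_sumx; apply: coef_le => j; rewrite geq_max => /andP[Lj L'j].
by rewrite c_supp // c'_supp // subr0.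
Qed.

Lemma closed_span_coefs f : closed_span E nE x f -> exists alpha, has_coefs f alpha.
Proof.
move=> [Ef approx].
have approx_j j : exists Lc : nat * (nat -> R), nE (fsub f (sumx Lc.1 Lc.2)) < j.+1%:R^-1.
  have j_pos : 0 < j.+1%:R^-1 :> R by rewrite invr_gt0.
  by have [L [c fc]] := approx _ j_pos; exists (L, c).
have [Lc hLc] := choice approx_j.
pose c j k := if (k < (Lc j).1)%N then (Lc j).2 k else 0.
have c_supp j : coef_supp (Lc j).1 (c j) by move=> k; rewrite /c ltnNge => ->.
have f_c j : nE (fsub f (sumx (Lc j).1 (c j))) < j.+1%:R^-1.
  suff -> : sumx (Lc j).1 (c j) = sumx (Lc j).1 (Lc j).2 by [].
  by apply: funext => t; apply: eq_bigr => k _; rewrite /c ltn_ord.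
have c_cauchy k j j' : `|c j k - c j' k| <= a^-1 / j.+1%:R + a^-1 / j'.+1%:R.
  apply: le_trans (coef_dist_le k (c_supp j) (c_supp j')) _.
  rewrite -mulrDr [leLHS]mulrC ler_wpM2l ?invr_ge0 ?(ltW a_gt0) //.
  apply: le_trans (nE_fsub_triangle HE (E_sumx _ _) Ef (E_sumx _ _)) _.
  rewrite (nE_fsubC HE (E_sumx _ _) Ef); exact: lerD (ltW (f_c j)) (ltW (f_c j')).
have [alpha c_alpha] := choice (fun k => exists_limit_at_rate (c_cauchy k)).
exists alpha => e e0.
have min_gt0 : 0 < Num.min e (e * a) by rewrite lt_min e0 mulr_gt0.
have [j] := exists_natSinv_lt min_gt0; rewrite lt_min => /andP[j_e j_ea].
exists (Lc j).1, (c j); split => //; first exact: ltW (lt_trans (f_c j) j_e).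
move=> k; apply: le_trans (c_alpha k j) _.
by rewrite mulrC ler_pdivrMr // ltW.
Qed.

Lemma sumx_lincomb n L (b : 'I_n -> R) (c : 'I_n -> nat -> R) :
  sumx L (fun k => \sum_i b i * c i k) = fun t => \sum_i b i * sumx L (c i) t.
Proof.
apply: funext => t; rewrite /sumx; under eq_bigr => k _ do rewrite mulr_suml.
rewrite exchange_big; apply: eq_bigr => i _; rewrite mulr_sumr.
by apply: eq_bigr => k _; rewrite mulrA.
Qed.

Lemma has_coefs_lincomb n (b : 'I_n -> R) (v : 'I_n -> Omega -> R)
    (alpha : 'I_n -> nat -> R) :
  (forall i, E (v i)) -> (forall i, has_coefs (v i) (alpha i)) ->
  has_coefs (fun t => \sum_i b i * v i t) (fun k => \sum_i b i * alpha i k).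
Proof.
move=> Ev v_alpha e e0.
pose B := \sum_i `|b i|.
have B0 : 0 <= B by rewrite sumr_ge0.
have e'0 : 0 < e / (B + 1) by rewrite divr_gt0 // ltr_wpDl.
have B_e' : B * (e / (B + 1)) <= e.
  by rewrite mulrCA ler_piMr ?(ltW e0) // ler_pdivrMr ?ltr_wpDl // mul1r lerDl.
have approx i : exists Lc : nat * (nat -> R), [/\ coef_supp Lc.1 Lc.2,
    nE (fsub (v i) (sumx Lc.1 Lc.2)) <= e / (B + 1) &
    forall k, `|Lc.2 k - alpha i k| <= e / (B + 1)].
  by have [L [c vc]] := v_alpha i _ e'0; exists (L, c).
have [Lc /all_and3[c_supp v_c c_alpha]] := choice approx.
pose L := (\max_i (Lc i).1)%N.
have L_ge i : ((Lc i).1 <= L)%N by exact: leq_bigmax.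
exists L, (fun k => \sum_i b i * (Lc i).2 k); split.
- by move=> k Lk; apply: big1 => i _; rewrite c_supp ?mulr0 // (leq_trans (L_ge i)).
- have -> : fsub (fun t => \sum_i b i * v i t) (sumx L (fun k => \sum_i b i * (Lc i).2 k))
      = fun t => \sum_i b i * fsub (v i) (sumx (Lc i).1 (Lc i).2) t.
    apply: funext => t; rewrite sumx_lincomb /fsub -sumrB; apply: eq_bigr => i _.
    by rewrite mulrBr (sumx_widen (L_ge i) (c_supp i)).
  apply: le_trans (nE_sum HE _ _ (fun i => E_fsub HE (Ev i) (E_sumx _ _))) _.
  apply: le_trans B_e'; rewrite mulr_suml; apply: ler_sum => i _.
  exact: ler_wpM2l (v_c i).
- move=> k; rewrite -sumrB; under eq_bigr do rewrite -mulrBr.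
  apply: le_trans (ler_norm_sum _ _ _) (le_trans _ B_e'); rewrite mulr_suml.
  by apply: ler_sum => i _; rewrite normrM ler_wpM2l.
Qed.

Lemma T_sumx_le L c N (B1 B2 : R) : 0 <= B1 -> 0 <= B2 ->
  (forall k, (k < N)%N -> `|c k| <= B1) -> (forall k, `|c k| <= B2) ->
  `|T (sumx L c)| <= 2 * C * (B1 + B2 * ((2 ^ N)%:R)^-1).
Proof.
move=> B10 B20 c_head c_all.
pose w k : R := ((2 ^ k)%:R)^-1.
have w0 k : 0 <= w k by rewrite invr_ge0 ler0n.
rewrite T_sumx; apply: le_trans (ler_norm_sum _ _ _) _.
apply: (@le_trans _ _ (C * (B1 * \sum_(k < L) w k + B2 * \sum_(k < L | (N <= k)%N) w k))).
  rewrite [X in B2 * X]big_mkcond !mulr_sumr -big_split mulr_sumr /=.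
  apply: ler_sum => k _; rewrite normrZ.
  apply: le_trans (ler_wpM2l (normr_ge0 _) (Tx_le k)) _.
  rewrite mulrCA ler_wpM2l //; case: leqP => Nk.
    by rewrite -mulrDl ler_wpM2r // (le_trans (c_all k)) // lerDr.
  by rewrite mulr0 addr0 ler_wpM2r // c_head.
have sum_w : \sum_(k < L) w k <= 2.
  have := sum_inv_pow2_tail_le R 0 L; rewrite expn0 invr1 mulr1.
  by under eq_bigl do rewrite leq0n.
have h1 := ler_wpM2l B10 sum_w.
have h2 := ler_wpM2l B20 (sum_inv_pow2_tail_le R N L).
rewrite (mulrC 2 C) -mulrA ler_wpM2l //; lra.
Qed.

Lemma nE_eq0_of_small_head f alpha N c : E f -> has_coefs f alpha ->
  (forall k, (k < N)%N -> alpha k = 0) -> 0 < c -> c * nE f <= `|T f| ->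
  2 * C * ((2 ^ N)%:R)^-1 / a <= c / 2 -> nE f = 0.
Proof.
move=> Ef f_alpha alpha_head c0 iso hN.
apply/eqP; rewrite eq_le (nE_ge0 HE Ef) andbT.
suff : c / 2 * nE f <= 0 by rewrite pmulr_rle0 // divr_gt0.
apply: (le0_of_forall_le_mul (M := 2 * C + c / 2 + K)) => [|e e0].
  by rewrite !addr_ge0 ?mulr_ge0 ?divr_ge0 ?(ltW c0).
have [L [beta [beta_supp fG beta_alpha]]] := f_alpha e e0.
have EG := E_sumx L beta.
set G := sumx L beta in fG EG *.
have beta_head k : (k < N)%N -> `|beta k| <= e.
  by move=> kN; rewrite -[beta k]subr0 -(alpha_head k kN).
have TG := T_sumx_le L (N := N) (ltW e0) (divr_ge0 (nE_ge0 HE EG) (ltW a_gt0)) beta_head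
  (fun k => coef_le k beta_supp).
have nG : nE G <= nE f + e.
  by have := nE_lerB_fsub HE EG Ef; rewrite (nE_fsubC HE EG Ef); lra.
have Tf : `|T f| <= `|T G| + K * e.
  have -> : T f = T G + T (fsub f G) by rewrite (T_fsub HE HT Ef EG) addrC subrK.
  apply: le_trans (ler_normD _ _) _; rewrite lerD2l.
  exact: le_trans (hK (E_fsub HE Ef EG)) (ler_wpM2l K0 fG).
have head_small : 2 * C * (nE G / a * ((2 ^ N)%:R)^-1) <= c / 2 * (nE f + e).
  have c20 : 0 <= c / 2 by rewrite divr_ge0 // ltW.
  apply: le_trans _ (ler_wpM2l c20 nG).
  have -> : 2 * C * (nE G / a * ((2 ^ N)%:R)^-1) = 2 * C * ((2 ^ N)%:R)^-1 / a * nE G.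
    by ring.
  by apply: ler_wpM2r => //; exact: (nE_ge0 HE EG).
lra.
Qed.

Lemma strictly_singular_on_closed_span :
  strictly_singular_on mu E nE T (closed_span E nE x).
Proof.
move=> Z [ZE Z0 [Zadd Zscale] _ _] Z_span Z_inf [c [c0 iso]].
have [N hN] : exists N : nat, 2 * C * ((2 ^ N)%:R)^-1 / a <= c / 2.
  have C1 : 0 < 4 * C + 1 by rewrite ltr_wpDl // mulr_ge0.
  have [N pN] := exists_inv_pow2_lt (divr_gt0 (mulr_gt0 c0 a_gt0) C1).
  exists N; apply: (@le_trans _ _ (2 * C * (c * a / (4 * C + 1)) / a)).
    by rewrite ler_wpM2r ?invr_ge0 ?(ltW a_gt0) // ler_wpM2l ?mulr_ge0 // ltW.
  have -> : 2 * C * (c * a / (4 * C + 1)) / a = c * (2 * C / (4 * C + 1)).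
    by field; rewrite (gt_eqF C1) (gt_eqF a_gt0).
  by rewrite ler_wpM2l ?(ltW c0) // ler_pdivrMr //; lra.
have [v [Zv v_indep]] := Z_inf N.+1.
have [alpha v_alpha] := choice (fun i => closed_span_coefs (Z_span _ (Zv i))).
have [b [i0 bi0] b_ker] := exists_kernel_vector (fun i (k : 'I_N) => alpha i k).
pose f t := \sum_i b i * v i t.
have Zf : Z f by apply: lincomb_closed.
have Ef := ZE _ Zf.
have nf0 : nE f = 0.
  apply: nE_eq0_of_small_head Ef (has_coefs_lincomb b (fun i => ZE _ (Zv i)) v_alpha)
    _ c0 (iso f Zf) hN.
  by move=> k kN; exact: b_ker (Ordinal kN).
by move/eqP: bi0; apply; exact: v_indep b ((nE_eq0 HE Ef).1 nf0) i0.
Qed.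

End DisjointSequence.

(** * Disjointification *)

Definition eps (R : realType) (n : nat) : R := ((2 ^ n)%:R)^-1 / 4.

Lemma eps_gt0 (R : realType) n : 0 < eps R n.
Proof. by rewrite /eps divr_gt0 // invr_gt0 ltr0n expn_gt0. Qed.

Lemma eps_le (R : realType) n : eps R n <= 1/4.
Proof.
rewrite /eps ler_pM2r ?invr_gt0 // invf_le1 ?ltr0n ?expn_gt0 //.
by rewrite ler1n expn_gt0.
Qed.

Section Pieces.
Variables (d : measure_display) (Omega : measurableType d) (R : realType)
  (mu : probability Omega R) (E : set (Omega -> R)) (nE : (Omega -> R) -> R).
Hypothesis HE : ocbl_repr mu E nE.
Variables (Y : normedModType R) (T : (Omega -> R) -> Y).
Hypothesis HT : bdd_op mu E nE T.
Variable K : R.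
Hypothesis K0 : 0 <= K.
Hypothesis hK : forall f, E f -> `|T f| <= K * nE f.

Lemma E_sub_scale (A : set Omega) (a : R) (f : Omega -> R) :
  E_sub mu E A f -> E_sub mu E A (fun t => a * f t).
Proof.
move=> [Ef fA]; split; first exact: (E_scale HE).
by apply: filterS fA => t fAt /fAt ->; rewrite mulr0.
Qed.

Lemma E_sub_bounded_approx (A : set Omega) (z : Omega -> R) (eta : R) :
  measurable A -> E_sub mu E A z -> 0 < eta ->
  exists (w : Omega -> R) (M : R), [/\ measurable_fun setT w,
    ae_le mu (fun t => `|w t|) (fun _ => M), 0 <= M,
    forall t, ~ A t -> w t = 0 & nE (fsub z w) <= eta].
Proof.
move=> mA [Ez zA] eta0.
have [g [M [mg gM zg]]] := Linf_dense HE Ez eta0.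
have Eg : E g by case: (Linf_sub HE mg gM).
pose w t := \1_A t * g t.
have mw : measurable_fun setT w.
  apply: measurable_realfun.measurable_funM mg.
  exact: @measurable_realfun.measurable_indic _ _ R setT A mA.
have wM : ae_le mu (fun t => `|w t|) (fun _ => `|M|).
  apply: filterS gM => t /= gtM.
  by apply: le_trans (normr_indicM_le _ _ _) (le_trans gtM (ler_norm M)).
have Ew : E w by case: (Linf_sub HE mw wM).
exists w, `|M|; split => //.
  by move=> t nAt; rewrite /w indicE memNset // mul0r.
apply: le_trans (ltW zg); apply: (nE_lattice HE (E_fsub HE Ez Ew) (E_fsub HE Ez Eg)).
apply: filterS zA => t zAt; rewrite /fsub /w indicE.
have [At|nAt] := pselect (A t); first by rewrite mem_set // mul1r.
by rewrite memNset // mul0r zAt // subr0 normr0.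
Qed.

Record bounded_piece (r e : R) (A : set Omega) (w : Omega -> R) (M : R) : Prop := {
  bp_mA : measurable A;
  bp_muA : (mu A < r%:E)%E;
  bp_mw : measurable_fun setT w;
  bp_wM : ae_le mu (fun t => `|w t|) (fun _ => M);
  bp_M0 : 0 <= M;
  bp_supp : forall t, ~ A t -> w t = 0;
  bp_nw : 1/2 <= nE w;
  bp_Tw : `|T w| <= e }.

Lemma E_bounded_piece r e A w M : bounded_piece r e A w M -> E w.
Proof. by case=> _ _ mw wM *; case: (Linf_sub HE mw wM). Qed.

Hypothesis not_iso_small : forall r, 0 < r -> exists A, [/\ measurable A,
  (mu A < r%:E)%E & ~ iso_on nE T (E_sub mu E A)].

Lemma exists_bounded_piece r e : 0 < r -> 0 < e -> exists A w M, bounded_piece r e A w M.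
Proof.
move=> r0 e0; have [A [mA muA not_iso]] := not_iso_small r0.
have e20 : 0 < e / 2 by rewrite divr_gt0.
have [z [[Ez zA] nz Tz]] :=
  not_iso_on_small HE HT (fun s => @proj1 _ _) (@E_sub_scale A) not_iso e20.
have K10 : 0 < K + 1 by rewrite ltr_wpDl.
pose eta := Num.min (1/2) (e / (2 * (K + 1))).
have eta0 : 0 < eta by rewrite lt_min !divr_gt0 // mulr_gt0.
have [w [M [mw wM M0 supp zw]]] := E_sub_bounded_approx mA (conj Ez zA) eta0.
have Ew : E w by case: (Linf_sub HE mw wM).
have eta_half : eta <= 1/2 by rewrite ge_min lexx.
have K_eta : K * eta <= e / 2.
  have eta_le : eta <= e / (2 * (K + 1)) by rewrite ge_min lexx orbT.
  apply: le_trans (ler_wpM2l K0 eta_le) _.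
  rewrite mulrA ler_pdivrMr ?mulr_gt0 //.
  have -> : e / 2 * (2 * (K + 1)) = e * (K + 1) by field.
  by rewrite mulrC ler_pM2l // lerDl.
exists A, w, M; split => //.
  by have := nE_lerB_fsub HE Ez Ew; rewrite nz; lra.
have -> : T w = T z - T (fsub z w) by rewrite (T_fsub HE HT Ez Ew) opprB addrC subrK.
apply: le_trans (ler_normB _ _) _; rewrite [e]splitr; apply: lerD; first exact: ltW.
by apply: le_trans (hK (E_fsub HE Ez Ew)) (le_trans (ler_wpM2l K0 zw) K_eta).
Qed.

Record piece := Piece { pw : Omega -> R; pA : set Omega; pM : R; pnext : R }.

(* [pnext p] is the measure left for all the pieces chosen after [p]. *)
Record good_piece (n : nat) (b : R) (p : piece) : Prop := {
  gp_bounded : bounded_piece (b / (2 ^ n.+1)%:R) (eps R n) (pA p) (pw p) (pM p);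
  gp_next_gt0 : 0 < pnext p;
  gp_next_le : pnext p <= b;
  gp_next_small : forall D, measurable D -> (mu D <= (pnext p)%:E)%E ->
    nE (fun t => pM p * \1_D t) <= eps R n }.

Lemma exists_good_piece n b : exists p, 0 < b -> good_piece n b p.
Proof.
have [b0|_] := ltP 0 b; last by exists (Piece (fun _ => 0) set0 0 0).
have pow_gt0 : 0 < (2 ^ n.+1)%:R :> R by rewrite ltr0n expn_gt0.
have [A [w [M bp]]] := exists_bounded_piece (divr_gt0 b0 pow_gt0) (eps_gt0 R n).
have M10 : 0 < M + 1 by rewrite ltr_wpDl // (bp_M0 bp).
have [eta eta0 small] := nE_indic_small_measure HE (divr_gt0 (eps_gt0 R n) M10).
exists (Piece w A M (Num.min b eta)) => _; split => //=.
- by rewrite lt_min b0.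
- by rewrite ge_min lexx.
move=> D mD muD; rewrite (nE_scale HE _ (E_indic HE mD)) ger0_norm ?(bp_M0 bp) //.
have muD_eta : (mu D <= eta%:E)%E by apply: le_trans muD _; rewrite lee_fin ge_min lexx orbT.
apply: le_trans (ler_wpM2l (bp_M0 bp) (small D mD muD_eta)) _.
by rewrite mulrCA ler_piMr ?(ltW (eps_gt0 R n)) // ler_pdivrMr // mul1r lerDl.
Qed.

Definition next_piece n b : piece := projT1 (cid (exists_good_piece n b)).

Fixpoint level n : R := if n is k.+1 then pnext (next_piece k (level k)) else 1.

Definition piece_at n := next_piece n (level n).

Lemma good_next_piece n b : 0 < b -> good_piece n b (next_piece n b).
Proof. exact: projT2 (cid (exists_good_piece n b)). Qed.

Lemma level_gt0 n : 0 < level n.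
Proof. by elim: n => [|n IH] //=; exact: gp_next_gt0 (good_next_piece n IH). Qed.

Lemma good_piece_at n : good_piece n (level n) (piece_at n).
Proof. exact: good_next_piece (level_gt0 n). Qed.

Lemma level_le m n : (m <= n)%N -> level n <= level m.
Proof.
elim: n => [|n IH]; first by rewrite leqn0 => /eqP ->.
rewrite leq_eqVlt => /predU1P[-> //|/IH]; apply: le_trans.
exact: gp_next_le (good_piece_at n).
Qed.

Definition later_pieces n := \bigcup_k pA (piece_at (k + n.+1)).

Definition dseq n : Omega -> R :=
  fun t => \1_(pA (piece_at n) `\` later_pieces n) t * pw (piece_at n) t.

Lemma measurable_piece n : measurable (pA (piece_at n)).
Proof. exact: bp_mA (gp_bounded (good_piece_at n)). Qed.

Lemma E_piece n : E (pw (piece_at n)).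
Proof. exact: E_bounded_piece (gp_bounded (good_piece_at n)). Qed.

Lemma measurable_later n : measurable (later_pieces n).
Proof. by apply: bigcupT_measurable => k; exact: measurable_piece. Qed.

Lemma measure_later_le n : (mu (later_pieces n) <= (level n.+1)%:E)%E.
Proof.
apply: measure_bigcup_le_halves => [|k|k]; first exact: ltW (level_gt0 _).
  exact: measurable_piece.
apply: le_trans (ltW (bp_muA (gp_bounded (good_piece_at _)))) _.
rewrite lee_fin ler_pM ?(ltW (level_gt0 _)) ?invr_ge0 ?ler0n //.
  by apply: level_le; rewrite addnS ltnS leq_addl.
by rewrite lef_pV2 ?posrE ?ltr0n ?expn_gt0 // ler_nat leq_exp2l // !ltnS leq_addr.
Qed.

Lemma dseq_disjoint n m t : n <> m -> dseq n t = 0 \/ dseq m t = 0.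
Proof.
have in_later k l : (k < l)%N -> pA (piece_at l) t -> later_pieces k t.
  by move=> kl Alt; exists (l - k.+1)%N => //; rewrite subnK.
move=> nm; rewrite /dseq !indicE.
have [/set_mem[An nLn]|] := boolP (t \in _); last by left; rewrite mul0r.
have [/set_mem[Am nLm]|] := boolP (t \in _); last by right; rewrite mul0r.
by case: (ltngtP n m) => [/in_later/(_ Am)|/in_later/(_ An)|] //.
Qed.

Lemma measurable_dseq n : measurable_fun setT (dseq n).
Proof.
apply: measurable_realfun.measurable_funM; last exact: bp_mw (gp_bounded (good_piece_at n)).
exact: measurable_realfun.measurable_indic
  (measurableD (measurable_piece n) (measurable_later n)).
Qed.

Lemma E_dseq n : E (dseq n).
Proof.
have xM : ae_le mu (fun t => `|dseq n t|) (fun _ => pM (piece_at n)).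
  apply: filterS (bp_wM (gp_bounded (good_piece_at n))) => t /=.
  exact: le_trans (normr_indicM_le _ _ _).
by case: (Linf_sub HE (measurable_dseq n) xM).
Qed.

Lemma nE_fsub_piece_dseq n : nE (fsub (pw (piece_at n)) (dseq n)) <= eps R n.
Proof.
have [bp _ _ next_small] := good_piece_at n.
apply: le_trans (next_small _ (measurable_later n) (measure_later_le n)).
apply: (nE_lattice HE (E_fsub HE (E_piece n) (E_dseq n))).
  exact: (E_scale HE _ (E_indic HE (measurable_later n))).
apply: filterS (bp_wM bp) => t /= wM; rewrite /fsub /dseq indicE.
have [/set_mem Bt|nBt] := boolP (t \in _); first by rewrite mul1r subrr normr0 normr_ge0.
rewrite mul0r subr0 indicE.
have [/set_mem Lt|nLt] := boolP (t \in later_pieces n).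
  by rewrite mulr1 (ger0_norm (bp_M0 bp)).
rewrite (bp_supp bp) ?normr0 ?mulr0 // => At; move/negP: nBt; apply.
by apply/mem_set; split => //; move/negP: nLt => nLt Lt; apply: nLt; exact/mem_set.
Qed.

Lemma nE_dseq_ge n : 1/4 <= nE (dseq n).
Proof.
have := nE_lerB_fsub HE (E_piece n) (E_dseq n).
have := bp_nw (gp_bounded (good_piece_at n)).
have := nE_fsub_piece_dseq n; have := eps_le R n; lra.
Qed.

Lemma T_dseq_le n : `|T (dseq n)| <= (1 + K) / 4 * ((2 ^ n)%:R)^-1.
Proof.
have -> : T (dseq n) = T (pw (piece_at n)) - T (fsub (pw (piece_at n)) (dseq n)).
  by rewrite (T_fsub HE HT (E_piece n) (E_dseq n)) opprB addrC subrK.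
apply: le_trans (ler_normB _ _) _.
have -> : (1 + K) / 4 * ((2 ^ n)%:R)^-1 = eps R n + K * eps R n.
  by rewrite /eps; field.
apply: lerD; first exact: bp_Tw (gp_bounded (good_piece_at n)).
apply: le_trans (hK (E_fsub HE (E_piece n) (E_dseq n))) _.
by apply: ler_wpM2l => //; exact: nE_fsub_piece_dseq.
Qed.

End Pieces.

Theorem corollary3p2 (d : measure_display) (Omega : measurableType d)
  (R : realType) (mu : probability Omega R)
  (E : set (Omega -> R)) (nE : (Omega -> R) -> R)
  (Y : completeNormedModType R) (T : (Omega -> R) -> Y) :
  ocbl_repr mu E nE -> bdd_op mu E nE T -> DNS mu E nE T ->
  exists r : R, 0 < r /\
    forall A : set Omega, measurable A ->
      (0 < mu A)%E -> (mu A < r%:E)%E ->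
      iso_on nE T (E_sub mu E A).
Proof.
move=> HE HT HDNS; apply: contrapT => no_r.
have not_iso_small r : 0 < r -> exists A, [/\ measurable A, (mu A < r%:E)%E &
    ~ iso_on nE T (E_sub mu E A)].
  move=> r0; apply: contrapT => all_iso; apply: no_r; exists r; split => // A mA _ muA.
  by apply: contrapT => not_iso; apply: all_iso; exists A.
have [K K0 hK] := bdd_op_nonneg_bound HE HT.
have Ex := E_dseq HE HT K0 hK not_iso_small.
have x_disjoint := dseq_disjoint HE HT K0 hK not_iso_small.
have nEx_ge := nE_dseq_ge HE HT K0 hK not_iso_small.
apply: HDNS; exists (dseq HE HT K0 hK not_iso_small); split.
  split => // [n x0|n m nm].
    by have := nEx_ge n; rewrite ((nE_eq0 HE (Ex n)).2 x0); lra.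
  apply: aeW => t; have [|] := x_disjoint n m t nm => ->.
    by rewrite normr0 min_l.
  by rewrite normr0 min_r.
apply: (strictly_singular_on_closed_span HE HT K0 hK Ex x_disjoint _ nEx_ge _
  (T_dseq_le HE HT K0 hK not_iso_small)) => //.
by rewrite divr_ge0 // addr_ge0.
Qed.
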